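(* Every tubal tensor $\mathcal A\in\mathbb{C}_p^{I_1\times\cdots\times I_N}$ can be written as $$\mathcal A=\mathcal S*_1\mathcal U_1*_2\mathcal U_2\cdots*_N\mathcal U_N,$$ where (1) each $\mathcal U_n\in\mathbb{C}_p^{I_n\times I_n}$ is unitary, and (2) $\mathcal S\in\mathbb{C}_p^{I_1\times\cdots\times I_N}$ is all-orthogonal: for all $1\le n\le N$ and all $1\le\alpha\neq\beta\le I_n$, $$\sum_{i_1,\dots,i_{n-1},i_{n+1},\dots,i_N}\mathcal S(i_1,\dots,i_{n-1},\alpha,i_{n+1},\dots,i_N)^H*\mathcal S(i_1,\dots,i_{n-1},\beta,i_{n+1},\dots,i_N)=\mathbf 0.$$ Moreover, if $L=cW$ with $c\in\mathbb{C}\setminus\{0\}$ and $W\in\mathbb{C}^{p\times p}$ a unitary matrix, then $\mathcal U_n$ and $\mathcal S$ can be chosen so that in addition the ordering property holds: for every $n$, $\|\mathcal S_{i_n=1}\|\ge\|\mathcal S_{i_n=2}\|\ge\cdots\ge\|\mathcal S_{i_n=I_n}\|$, where $\mathcal S_{i_n=\alpha}$ is the subtensor of $\mathcal S$ obtained by fixing the $n$-th index to $\alpha$ (equivalently the $\alpha$-th row of $\mathcal S_{(n)}$).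
   Context: Fix an integer $p\ge1$ and an invertible linear map $L:\mathbb{C}^p\to\mathbb{C}^p$. A tubal scalar is an element of $\mathbb{C}_p:=\mathbb{C}^p$; $\mathbf 0$ is the zero tubal scalar. The tensor-tensor product of tubal scalars is $\mathbf a*\mathbf b=L^{-1}(L(\mathbf a)\odot L(\mathbf b))$, where $\odot$ is the componentwise product. A tubal matrix $\mathcal A\in\mathbb{C}_p^{I\times J}$ is an $I\times J$ array of tubal scalars (identified with an array in $\mathbb{C}^{I\times J\times p}$); its $k$-th frontal slice $\mathcal A^{(k)}$ has entries $\mathcal A(i,j)^{(k)}$, and $L(\mathcal A)$ is obtained by applying $L$ to every entry. For $\mathcal A\in\mathbb{C}_p^{I\times J}$, $\mathcal B\in\mathbb{C}_p^{J\times K}$, $(\mathcal A*\mathcal B)(i,k)=\sum_j\mathcal A(i,j)*\mathcal B(j,k)$; equivalently $L(\mathcal A*\mathcal B)^{(k)}=L(\mathcal A)^{(k)}L(\mathcal B)^{(k)}$. The identity $\mathcal I_I$ has $L(\mathcal I_I)^{(k)}$ equal to the identity matrix for all $k$. The Hermitian transpose is defined by $L(\mathcal A^H)^{(k)}=(L(\mathcal A)^{(k)})^H$ (for a tubal scalar, viewed as a $1\times1$ tubal matrix). $\mathcal A\in\mathbb{C}_p^{I\times I}$ is unitary if $\mathcal A*\mathcal A^H=\mathcal A^H*\mathcal A=\mathcal I_I$. A tubal tensor $\mathcal A\in\mathbb{C}_p^{I_1\times\cdots\times I_N}$ is an $N$-way array of tubal scalars. Its mode-$n$ unfolding $\mathcal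 A_{(n)}\in\mathbb{C}_p^{I_n\times\prod_{m\neq n}I_m}$ has $\mathcal A_{(n)}(i_n,j)=\mathcal A(i_1,\dots,i_N)$, where $j=1+\sum_{k\neq n}(i_k-1)\prod_{m<k,\,m\neq n}I_m$. For $\mathcal U\in\mathbb{C}_p^{J\times I_n}$, the $n$-mode product is $(\mathcal A*_n\mathcal U)(i_1,\dots,i_{n-1},j,i_{n+1},\dots,i_N)=\sum_{i_n}\mathcal A(i_1,\dots,i_N)*\mathcal U(j,i_n)$; repeated mode products are evaluated left to right. $\|\cdot\|$ denotes the Frobenius norm (Euclidean norm of all complex entries of the underlying array). *)

(* The complex field is modelled as R[i] (real_closed's
   [complex R]) for an arbitrary real closed field R; taking R = the reals
   gives the usual C. *)
From HB Require Import structures.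
From mathcomp Require Import all_boot all_order all_algebra.
From mathcomp Require Export complex.
Set Implicit Arguments.
Unset Strict Implicit.
Unset Printing Implicit Defensive.
Import Order.TTheory GRing.Theory Num.Theory.
Local Open Scope ring_scope.

Section Tubal.
Variables (R : rcfType) (p : nat) (L : 'M[R[i]]_p).
Local Notation C := R[i].

Definition tscal := 'cV[C]_p.

Definition tmul (a b : tscal) : tscal :=
  invmx L *m \col_k ((L *m a) k 0 * (L *m b) k 0).

Definition tconj (a : tscal) : tscal :=
  invmx L *m map_mx (fun z : C => z^*) (L *m a).

Definition tone : tscal := invmx L *m const_mx 1.

Definition tmat (m n : nat) := 'I_m -> 'I_n -> tscal.

Definition tmatmul m n k (A : tmat m n) (B : tmat n k) : tmat m k :=
  fun i l => \sum_(j < n) tmul (A i j) (B j l).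

Definition tmatH m n (A : tmat m n) : tmat n m := fun i j => tconj (A j i).

Definition tident n : tmat n n := fun i j => if i == j then tone else 0.

Definition tunitary n (U : tmat n n) : Prop :=
  (forall i j, tmatmul U (tmatH U) i j = @tident n i j) /\
  (forall i j, tmatmul (tmatH U) U i j = @tident n i j).

Variables (N : nat) (I : 'I_N -> nat).
Definition tidx := {dffun forall n : 'I_N, 'I_(I n)}.
Definition ttensor := tidx -> tscal.

Definition modeprod (A : ttensor) (n : 'I_N) (U : tmat (I n) (I n)) : ttensor :=
  fun i => \sum_(j : tidx | [forall m, (m != n) ==> (j m == i m)])
             tmul (A j) (U (i n) (j n)).

Definition modeprod_all (S : ttensor) (U : forall n : 'I_N, tmat (I n) (I n))
  : ttensor :=
  foldl (fun T n => modeprod T (U n)) S (enum 'I_N).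

Definition all_orthogonal (S : ttensor) : Prop :=
  forall (n : 'I_N) (a b : 'I_(I n)), a != b ->
    \sum_(i : tidx | i n == a)
      \sum_(j : tidx | (j n == b) && [forall m, (m != n) ==> (j m == i m)])
        tmul (tconj (S i)) (S j) = 0.

Definition slice_norm (S : ttensor) (n : 'I_N) (a : 'I_(I n)) : C :=
  sqrtC (\sum_(i : tidx | i n == a) \sum_(k < p) `|S i k 0| ^+ 2).

Definition ordered_slices (S : ttensor) : Prop :=
  forall (n : 'I_N) (a b : 'I_(I n)), (a <= b)%N ->
    slice_norm S b <= slice_norm S a.
End Tubal.

Definition cunitary (R : rcfType) (p : nat) (W : 'M[R[i]]_p) : Prop :=
  W *m (map_mx (fun z : R[i] => z^*) W)^T = 1%:M /\
  (map_mx (fun z : R[i] => z^*) W)^T *m W = 1%:M.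

From HB Require Import structures.
From mathcomp Require Import all_boot all_order all_algebra.
From mathcomp Require Import complex ring.
Import Order.TTheory GRing.Theory Num.Theory Num.Def.
Set Implicit Arguments.
Unset Strict Implicit.
Unset Printing Implicit Defensive.
Local Open Scope ring_scope.
Local Open Scope sesquilinear_scope.

(* Applying [L] to the tubes turns the tubal product into the entrywise
   product, so every identity can be checked one frontal slice [k] of the
   transformed tensors at a time, where it is a statement about an ordinary
   complex tensor.  On slice [k] the construction is the classical HOSVD: the
   mode-[n] factor comes from an eigenbasis [P] of the Hermitian mode-[n] Gram
   matrix [G] of [L(A)], sorted by decreasing eigenvalue, and the core is [L(A)]
   multiplied in every mode by [conj P].  Multiplying a tensor in all modes by
   matrices with orthonormal columns transforms its mode-[n] Gram matrix by
   conjugation, so the Gram matrix of the core is the diagonal matrix [P G P^H]: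
   this is all-orthogonality.  Its diagonal entries are the squared norms of the
   slices of the transformed core; when [L = c W] with [W] unitary, the norm of a
   tube is [|c|^-1] times the norm of its transform, so summing the sorted
   eigenvalues over [k] orders the slice norms. *)

Lemma bigA_distr_dffun (K : comNzSemiRingType) (J : finType) (T_ : J -> finType)
    (F : forall j, T_ j -> K) :
  \prod_j \sum_(x : T_ j) F j x = \sum_(t : {dffun forall j, T_ j}) \prod_j F j (t j).
Proof.
symmetry; rewrite (reindex (@dffun_of_fprod J T_)) /=; last first.
  exact/onW_bij/dffun_of_fprod_bij.
pose P_ j := [ffun x : T_ j => F j x].
transitivity (\sum_(t : fprod T_) \prod_(j in J) P_ j (t j)).
  by apply: eq_bigr => t _; apply: eq_bigr => j _; rewrite !ffunE.
rewrite big_fprod.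
transitivity (\prod_j \sum_(x in tagged_with T_ j) untag 0 (P_ j) x).
  by rewrite bigA_distr_big_dep; apply: eq_bigl.
apply: eq_bigr => j _; rewrite -(big_tag P_ j).
by apply: eq_bigr => x _; rewrite ffunE.
Qed.

Lemma sum_delta (K : pzSemiRingType) (T : finType) (a : T) (f : T -> K) :
  \sum_x (x == a)%:R * f x = f a.
Proof.
rewrite (bigD1 a) //= eqxx mul1r big1 ?addr0 // => x /negbTE->.
by rewrite mul0r.
Qed.

Lemma sum_delta2 (K : pzSemiRingType) (T1 T2 : finType) (a : T1) (b : T2)
    (f : T1 -> T2 -> K) :
  \sum_x \sum_y ((x == a) && (y == b))%:R * f x y = f a b.
Proof.
under eq_bigr => x _ do under eq_bigr => y _ do rewrite -mulnb natrM -mulrA.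
by under eq_bigr => x _ do rewrite -big_distrr /= sum_delta; rewrite sum_delta.
Qed.

Lemma prod_delta_dffun (K : comNzSemiRingType) (J : finType) (T_ : J -> finType)
    (i j : {dffun forall m, T_ m}) :
  \prod_m ((i m == j m)%:R : K) = (i == j)%:R.
Proof.
have [->|/eqP neq_ij] := eqVneq i j; first by rewrite big1 // => m _; rewrite eqxx.
have [m /negbTE neq_m] : exists m, i m != j m.
  by apply/existsP; apply: contra_notT neq_ij; rewrite negb_exists => /forallP eq_ij;
     apply/ffunP => m; apply/eqP; rewrite -[_ == _]negbK eq_ij.
by rewrite (bigD1 m) //= neq_m mul0r.
Qed.

Lemma prod_delta_dffun_but (K : comNzSemiRingType) (J : finType) (T_ : J -> finType)
    (n : J) (i j : {dffun forall m, T_ m}) :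
  \prod_(m | m != n) ((i m == j m)%:R : K) =
  [forall m, (m != n) ==> (i m == j m)]%:R.
Proof.
case: forallP => [eq_ij|/forallP].
  by rewrite big1 // => m /(implyP (eq_ij m)) ->.
rewrite negb_forall => /existsP[m]; rewrite negb_imply => /andP[neq_mn /negbTE neq_m].
by rewrite (bigD1 m neq_mn) /= neq_m mul0r.
Qed.

Lemma exchange_big2 (K : nmodType) (T1 T2 T3 T4 : finType)
    (F : T1 -> T2 -> T3 -> T4 -> K) :
  \sum_a \sum_b \sum_c \sum_d F a b c d = \sum_c \sum_d \sum_a \sum_b F a b c d.
Proof.
under eq_bigr => a _ do
  (rewrite exchange_big /=; under eq_bigr => c _ do rewrite exchange_big /=).
by rewrite exchange_big /=; apply: eq_bigr => c _; rewrite exchange_big.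
Qed.

Section ComplexTensor.
Variables (C : numClosedFieldType) (N : nat) (I : 'I_N -> nat).
Local Notation tidx := (@tidx N I).
Implicit Types (T : tidx -> C) (Q : forall m, 'M[C]_(I m)).

Definition cmodeprod Q T : tidx -> C :=
  fun j => \sum_(i : tidx) (\prod_m Q m (j m) (i m)) * T i.

Lemma eq_cmodeprodl Q Q' T :
  (forall m, Q m = Q' m) -> cmodeprod Q T =1 cmodeprod Q' T.
Proof.
move=> eqQ j; apply: eq_bigr => i _; congr (_ * _).
by apply: eq_bigr => m _; rewrite eqQ.
Qed.

Lemma eq_cmodeprodr Q T T' : T =1 T' -> cmodeprod Q T =1 cmodeprod Q T'.
Proof. by move=> eqT j; apply: eq_bigr => i _; rewrite eqT. Qed.

Lemma cmodeprod1 T : cmodeprod (fun m => 1%:M) T =1 T.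
Proof.
move=> j; rewrite -[RHS](sum_delta j T); apply: eq_bigr => i _.
rewrite -prod_delta_dffun; congr (_ * _); apply: eq_bigr => m _.
by rewrite mxE eq_sym.
Qed.

Lemma cmodeprodM Q Q' T :
  cmodeprod Q (cmodeprod Q' T) =1 cmodeprod (fun m => Q m *m Q' m) T.
Proof.
move=> j; rewrite /cmodeprod.
under eq_bigr => i _ do rewrite big_distrr /=.
rewrite exchange_big /=; apply: eq_bigr => l _.
under eq_bigr => i _ do rewrite mulrA.
rewrite -big_distrl /=; congr (_ * _).
under [RHS]eq_bigr => m _ do rewrite mxE.
by rewrite bigA_distr_dffun; apply: eq_bigr => i _; rewrite big_split.
Qed.

Definition mode_gram T (n : 'I_N) : 'M[C]_(I n) :=
  \matrix_(a, b) \sum_(i : tidx | i n == a)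
    \sum_(j : tidx | (j n == b) && [forall m, (m != n) ==> (j m == i m)])
      (T i)^* * T j.

Lemma eq_mode_gram T T' n : T =1 T' -> mode_gram T n = mode_gram T' n.
Proof.
move=> eqT; apply/matrixP => a b; rewrite !mxE; apply: eq_bigr => i _.
by apply: eq_bigr => j _; rewrite !eqT.
Qed.

(* The branch [m == n] compares values since [x : 'I_(I m)] and [a : 'I_(I n)]
   have different types. *)
Definition mode_delta n (a b : 'I_(I n)) m (x y : 'I_(I m)) : C :=
  if m == n then ((val x == val a) && (val y == val b))%:R else (x == y)%:R.

Lemma prod_mode_delta n (a b : 'I_(I n)) (i j : tidx) :
  \prod_m mode_delta a b (i m) (j m) =
  ((i n == a) && (j n == b))%:R * [forall m, (m != n) ==> (j m == i m)]%:R.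
Proof.
rewrite (bigD1 n) //= /mode_delta eqxx !val_eqE; congr (_ * _).
rewrite -(prod_delta_dffun_but _ n j i).
by apply: eq_bigr => m /negbTE->; rewrite eq_sym.
Qed.

Lemma mode_gram_deltaE T n a b :
  mode_gram T n a b =
  \sum_(i : tidx) \sum_(j : tidx)
    (\prod_m mode_delta a b (i m) (j m)) * ((T i)^* * T j).
Proof.
rewrite mxE big_mkcond /=; apply: eq_bigr => i _.
under [RHS]eq_bigr => j _ do rewrite prod_mode_delta.
have [_|_] := eqVneq (i n) a; last by rewrite big1 // => j _; rewrite !mul0r.
rewrite big_mkcond /=; apply: eq_bigr => j _.
by case: (j n == b); case: [forall _, _]; rewrite /= ?mul1r ?mul0r.
Qed.

Lemma mode_gram_herm T n : mode_gram T n \is hermsymmx.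
Proof.
apply/is_hermitianmxP; rewrite expr0 scale1r; apply/matrixP => a b.
rewrite [RHS]mxE [X in X^*]mxE !mode_gram_deltaE rmorph_sum exchange_big /=.
apply: eq_bigr => i _.
rewrite rmorph_sum; apply: eq_bigr => j _.
rewrite !rmorphM rmorph_prod /= conjCK [(T j)^* * _]mulrC; congr (_ * _).
apply: eq_bigr => m _; rewrite /mode_delta.
by case: eqP => _; rewrite conjC_nat; [rewrite andbC | rewrite eq_sym].
Qed.

Lemma mode_gram_diag T n a :
  mode_gram T n a a = \sum_(i : tidx | i n == a) `|T i| ^+ 2.
Proof.
rewrite mxE; apply: eq_bigr => i /eqP in_a.
rewrite (big_pred1 i) ?normCK 1?mulrC // => j /=.
apply/andP/eqP => [[/eqP jn_a /forallP eq_ji]|->]; last first.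
  by split; [rewrite in_a | apply/forallP => m; apply/implyP].
apply/ffunP => m; have [->|/(implyP (eq_ji m))/eqP //] := eqVneq m n.
by rewrite jn_a.
Qed.

Lemma sesqui_form_cmodeprod (w : forall m, 'I_(I m) -> 'I_(I m) -> C) Q T :
  \sum_(i : tidx) \sum_(j : tidx)
      (\prod_m w m (i m) (j m)) * ((cmodeprod Q T i)^* * cmodeprod Q T j) =
  \sum_(u : tidx) \sum_(v : tidx)
      (\prod_m \sum_x \sum_y w m x y * ((Q m x (u m))^* * Q m y (v m))) *
      ((T u)^* * T v).
Proof.
transitivity (\sum_(u : tidx) \sum_(v : tidx) \sum_(i : tidx) \sum_(j : tidx)
  (\prod_m (w m (i m) (j m) * ((Q m (i m) (u m))^* * Q m (j m) (v m)))) *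
  ((T u)^* * T v)).
  rewrite -exchange_big2; apply: eq_bigr => i _; apply: eq_bigr => j _.
  rewrite rmorph_sum big_distrlr /= big_distrr /=; apply: eq_bigr => u _.
  rewrite big_distrr /=; apply: eq_bigr => v _.
  rewrite !big_split /= rmorphM rmorph_prod /=; ring.
apply: eq_bigr => u _; apply: eq_bigr => v _.
under [LHS]eq_bigr => i _ do rewrite -mulr_suml.
rewrite -mulr_suml bigA_distr_dffun; congr (_ * _).
by apply: eq_bigr => i _; rewrite bigA_distr_dffun.
Qed.

Lemma mode_gram_cmodeprod Q T n :
  (forall m, m != n -> (Q m)^t* *m Q m = 1%:M) ->
  mode_gram (cmodeprod Q T) n = map_mx conjC (Q n) *m mode_gram T n *m (Q n)^T.
Proof.
move=> Q_unitary; apply/matrixP => a b.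
have kernel_off m (u v : 'I_(I m)) : m != n ->
    \sum_x \sum_y mode_delta a b x y * ((Q m x u)^* * Q m y v) = (v == u)%:R.
  move=> neq_mn; rewrite /mode_delta (negbTE neq_mn) eq_sym.
  under eq_bigr => x _ do under eq_bigr => y _ do rewrite eq_sym.
  under eq_bigr => x _ do rewrite sum_delta.
  by move: (Q_unitary m neq_mn) => /matrixP/(_ u v); rewrite !mxE => <-;
     apply: eq_bigr => x _; rewrite !mxE.
have kernel_n (u v : 'I_(I n)) :
    \sum_x \sum_y mode_delta a b x y * ((Q n x u)^* * Q n y v) =
    (Q n a u)^* * Q n b v.
  rewrite /mode_delta eqxx.
  under eq_bigr => x _ do under eq_bigr => y _ do rewrite !val_eqE.
  exact: sum_delta2.
rewrite mode_gram_deltaE sesqui_form_cmodeprod.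
transitivity (\sum_(u : tidx) \sum_(v : tidx) (Q n a (u n))^* * Q n b (v n) *
    [forall m, (m != n) ==> (v m == u m)]%:R * ((T u)^* * T v)).
  apply: eq_bigr => u _; apply: eq_bigr => v _.
  rewrite (bigD1 n) //= kernel_n; congr (_ * _ * _).
  by rewrite -prod_delta_dffun_but; apply: eq_bigr => m; apply: kernel_off.
symmetry; transitivity (\sum_x \sum_y \sum_(u : tidx) \sum_(v : tidx)
    (Q n a x)^* * Q n b y *
    ((\prod_m mode_delta x y (u m) (v m)) * ((T u)^* * T v))).
  rewrite mxE; under eq_bigr => y _ do rewrite mxE big_distrl /=.
  rewrite exchange_big /=; apply: eq_bigr => x _; apply: eq_bigr => y _.
  rewrite mode_gram_deltaE !mxE mulrAC big_distrr /=; apply: eq_bigr => u _.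
  by rewrite big_distrr.
rewrite exchange_big2; apply: eq_bigr => u _; apply: eq_bigr => v _.
under eq_bigr => x _ do under eq_bigr => y _ do
  rewrite prod_mode_delta (eq_sym (u n)) (eq_sym (v n)) mulrCA -!mulrA.
by rewrite sum_delta2; ring.
Qed.

End ComplexTensor.

Section SortDesc.
Variables (R : numDomainType) (m : nat) (e : 'I_m -> R).

Let le_desc (x y : 'I_m) := e y <= e x.

Definition sort_desc (a : 'I_m) : 'I_m := nth a (sort le_desc (enum 'I_m)) a.

Let size_sort_desc : size (sort le_desc (enum 'I_m)) = m.
Proof. by rewrite size_sort size_enum_ord. Qed.

Lemma sort_desc_inj : injective sort_desc.
Proof.
move=> a b /eqP; rewrite /sort_desc (set_nth_default b a) ?size_sort_desc //.
by rewrite nth_uniq ?size_sort_desc ?sort_uniq ?enum_uniq // => /eqP/val_inj.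
Qed.

Lemma sort_desc_le : (forall i, e i \is Num.real) ->
  forall a b : 'I_m, (a <= b)%N -> e (sort_desc b) <= e (sort_desc a).
Proof.
move=> e_real a b le_ab; rewrite /sort_desc (set_nth_default a b) ?size_sort_desc //.
have le_total : total le_desc by move=> x y; apply: real_leVge.
have le_trans : transitive le_desc by move=> x y z /[swap]; apply: le_trans.
have le_refl : reflexive le_desc by move=> x; apply: lexx.
apply: (sorted_leq_nth le_trans le_refl) (sort_sorted le_total _) _ _ _ _ le_ab;
  by rewrite inE size_sort_desc.
Qed.

End SortDesc.

Lemma trmxC_mul_unitary (C : numClosedFieldType) n (M : 'M[C]_n) :
  M \is unitarymx -> M^t* *m M = 1%:M.
Proof. by move=> M_unitary; rewrite -[M^t*]mul1mx mulmxKtV. Qed.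

Section SortedSpectral.
Variables (C : numClosedFieldType) (m : nat).
Implicit Types H : 'M[C]_m.

Definition sorted_spectralmx H : 'M[C]_m :=
  \matrix_(a, x) spectralmx H (sort_desc (spectral_diag H 0) a) x.

Definition sorted_spectral_diag H : 'rV[C]_m :=
  \row_a spectral_diag H 0 (sort_desc (spectral_diag H 0) a).

Lemma sorted_spectral_unitarymx H : sorted_spectralmx H \is unitarymx.
Proof.
apply/unitarymxP/matrixP => a b.
have /unitarymxP/matrixP/(_ (sort_desc (spectral_diag H 0) a)
  (sort_desc (spectral_diag H 0) b)) := spectral_unitarymx H.
rewrite !mxE (inj_eq (@sort_desc_inj _ _ _)) => <-.
by apply: eq_bigr => x _; rewrite !mxE.
Qed.

Lemma sorted_spectralP H : H \is hermsymmx ->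
  sorted_spectralmx H *m H *m (sorted_spectralmx H)^t* =
  diag_mx (sorted_spectral_diag H).
Proof.
move=> /hermitian_normalmx /orthomx_spectralP H_eq.
have Q_unitary := spectral_unitarymx H.
have diagQ : spectralmx H *m H *m (spectralmx H)^t* = diag_mx (spectral_diag H).
  move: H_eq Q_unitary; set Q := spectralmx H; set D := spectral_diag H.
  move=> -> Q_unitary; rewrite invmx_unitary // !mulmxA (unitarymxP Q_unitary).
  by rewrite mul1mx mulmxtVK.
rewrite /sorted_spectralmx /sorted_spectral_diag.
set f := sort_desc _; apply/matrixP => a b.
have /matrixP/(_ (f a) (f b)) := diagQ.
rewrite !mxE (inj_eq (@sort_desc_inj _ _ _)) => <-.
apply: eq_bigr => y _; rewrite !mxE; congr (_ * _).
by apply: eq_bigr => x _; rewrite !mxE.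
Qed.

Lemma sorted_spectral_diag_le H : H \is hermsymmx ->
  forall a b : 'I_m, (a <= b)%N ->
  sorted_spectral_diag H 0 b <= sorted_spectral_diag H 0 a.
Proof.
move=> /hermitian_spectral_diag_real /mxOverP real_e a b le_ab; rewrite !mxE.
exact: sort_desc_le.
Qed.

End SortedSpectral.

Section TubalTransform.
Variables (R : rcfType) (p : nat) (L : 'M[R[i]]_p).
Hypothesis L_unit : L \in unitmx.
Local Notation C := R[i].
Local Notation tscal := (tscal R p).

Definition hat (a : tscal) (k : 'I_p) : C := (L *m a) k 0.
Definition unhat (v : 'I_p -> C) : tscal := invmx L *m \col_k v k.

Lemma hat_unhat v k : hat (unhat v) k = v k.
Proof. by rewrite /hat /unhat mulKVmx // mxE. Qed.

Lemma hat_inj a b : (forall k, hat a k = hat b k) -> a = b.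
Proof.
move=> eq_ab; rewrite -(mulKmx L_unit a) -(mulKmx L_unit b); congr (_ *m _).
by apply/matrixP => k j; rewrite (ord1 j); apply: eq_ab.
Qed.

Lemma hat_tmul a b k : hat (tmul L a b) k = hat a k * hat b k.
Proof. by rewrite /hat /tmul mulKVmx // mxE. Qed.

Lemma hat_tconj a k : hat (tconj L a) k = (hat a k)^*.
Proof. by rewrite /hat /tconj mulKVmx // mxE. Qed.

Lemma hat0 k : hat 0 k = 0.
Proof. by rewrite /hat mulmx0 mxE. Qed.

Lemma hat_tident n (a b : 'I_n) k : hat (tident L a b) k = (a == b)%:R.
Proof.
rewrite /tident; case: eqP => _; last exact: hat0.
by rewrite /hat /tone mulKVmx // mxE.
Qed.

Lemma hat_sum (J : Type) (r : seq J) (P : pred J) (F : J -> tscal) k :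
  hat (\sum_(j <- r | P j) F j) k = \sum_(j <- r | P j) hat (F j) k.
Proof.
apply: (big_morph (hat^~ k)) => [a b|]; last exact: hat0.
by rewrite /hat mulmxDr mxE.
Qed.

Variables (N : nat) (I : 'I_N -> nat).
Local Notation tidx := (@tidx N I).
Local Notation ttensor := (ttensor R p I).

Definition hatT (T : ttensor) k : tidx -> C := fun i => hat (T i) k.
Definition hatmx m n (U : tmat R p m n) k : 'M[C]_(m, n) :=
  \matrix_(x, y) hat (U x y) k.

Definition hat_modes (U : forall m, tmat R p (I m) (I m)) (s : seq 'I_N) k m :
  'M[C]_(I m) := if m \in s then hatmx (U m) k else 1%:M.

Lemma hat_modeprod (T : ttensor) (U : forall m, tmat R p (I m) (I m)) n k :
  hatT (modeprod L T (U n)) k =1 cmodeprod (hat_modes U [:: n] k) (hatT T k).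
Proof.
move=> i; rewrite /hatT /modeprod hat_sum big_mkcond /=; apply: eq_bigr => j _.
rewrite (bigD1 n) //= /hat_modes mem_seq1 eqxx mxE.
under eq_bigr => m neq_mn do rewrite mem_seq1 (negbTE neq_mn) mxE eq_sym.
rewrite prod_delta_dffun_but; case: [forall _, _]; last by rewrite mulr0 mul0r.
by rewrite hat_tmul mulr1 mulrC.
Qed.

Lemma hat_foldl_modeprod (S : ttensor) (U : forall m, tmat R p (I m) (I m)) s k :
  uniq s ->
  hatT (foldl (fun T n => modeprod L T (U n)) S s) k =1
  cmodeprod (hat_modes U s k) (hatT S k).
Proof.
elim/last_ind: s => [_|s n IHs].
  by move=> i; rewrite -(@cmodeprod1 _ _ _ (hatT S k) i); apply: eq_cmodeprodl.
rewrite rcons_uniq => /andP[n_notin_s uniq_s] i.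
rewrite foldl_rcons hat_modeprod (eq_cmodeprodr _ (IHs uniq_s)) cmodeprodM.
apply: eq_cmodeprodl => m; rewrite /hat_modes mem_rcons in_cons mem_seq1.
have [->|_] /= := eqVneq m n; last by rewrite mul1mx.
by rewrite (negbTE n_notin_s) mulmx1.
Qed.

Lemma hat_modeprod_all (S : ttensor) (U : forall m, tmat R p (I m) (I m)) k :
  hatT (modeprod_all L S U) k =1 cmodeprod (fun m => hatmx (U m) k) (hatT S k).
Proof.
move=> i; rewrite hat_foldl_modeprod ?enum_uniq //.
by apply: eq_cmodeprodl => m; rewrite /hat_modes mem_enum.
Qed.

Lemma all_orthogonal_hat (S : ttensor) :
  (forall k n (a b : 'I_(I n)), a != b -> mode_gram (hatT S k) n a b = 0) ->
  all_orthogonal L S.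
Proof.
move=> gram_offdiag n a b neq_ab; apply: hat_inj => k.
rewrite hat0 -(gram_offdiag k n a b neq_ab) mxE hat_sum; apply: eq_bigr => i _.
by rewrite hat_sum; apply: eq_bigr => j _; rewrite hat_tmul hat_tconj.
Qed.

Lemma tscal_norm2 (c : C) (W : 'M[C]_p) (a : tscal) :
  c != 0 -> cunitary W -> L = c *: W ->
  \sum_k `|a k 0| ^+ 2 = `|c| ^- 2 * \sum_k `|hat a k| ^+ 2.
Proof.
move=> c_neq0 [_]; rewrite map_trmx => W_unitary L_eq.
have colnorm (u : 'cV[C]_p) : \sum_k `|u k 0| ^+ 2 = (u^t* *m u) 0 0.
  by rewrite mxE; apply: eq_bigr => k _; rewrite !mxE normCK mulrC.
rewrite colnorm [X in _ * X](colnorm (L *m a)) L_eq -scalemxAl.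
rewrite [(c *: _)^T]linearZ /= map_mxZ -scalemxAl -scalemxAr trmx_mul map_mxM.
rewrite mulmxA -(mulmxA _ _ W) W_unitary mulmx1.
rewrite [in RHS]mxE [in RHS]mxE !mulrA -(mulrA _ _ c) [_ * c]mulrC -normCK.
by rewrite mulVf ?mul1r // expf_neq0 // normr_eq0.
Qed.

Lemma ordered_slices_hat (c : C) (W : 'M[C]_p) (S : ttensor) :
  c != 0 -> cunitary W -> L = c *: W ->
  (forall k n (a b : 'I_(I n)), (a <= b)%N ->
     mode_gram (hatT S k) n b b <= mode_gram (hatT S k) n a a) ->
  ordered_slices S.
Proof.
move=> c_neq0 W_unitary L_eq gram_le n a b le_ab.
have sliceE x : \sum_(i : tidx | i n == x) \sum_k `|S i k 0| ^+ 2 =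
    `|c| ^- 2 * \sum_k mode_gram (hatT S k) n x x.
  under eq_bigr => i _ do rewrite (tscal_norm2 _ c_neq0 W_unitary L_eq).
  rewrite -big_distrr /= exchange_big /=; congr (_ * _); apply: eq_bigr => k _.
  by rewrite mode_gram_diag.
have slice_ge0 x : 0 <= `|c| ^- 2 * \sum_k mode_gram (hatT S k) n x x.
  rewrite mulr_ge0 ?invr_ge0 ?exprn_ge0 // sumr_ge0 // => k _.
  by rewrite mode_gram_diag sumr_ge0 // => i _; rewrite exprn_ge0.
rewrite /slice_norm !sliceE ler_sqrtC ?nnegrE // ler_wpM2l ?invr_ge0 ?exprn_ge0 //.
by apply: ler_sum => k _; apply: gram_le.
Qed.

Variable A : ttensor.

Definition hosvd_basis n k : 'M[C]_(I n) :=
  map_mx conjC (sorted_spectralmx (mode_gram (hatT A k) n)).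

Definition hosvd_factor n : tmat R p (I n) (I n) :=
  fun a b => unhat (fun k => (hosvd_basis n k)^t* a b).
Arguments hosvd_factor n : clear implicits.

Definition hosvd_core : ttensor :=
  fun j => unhat (fun k => cmodeprod (hosvd_basis^~ k) (hatT A k) j).

Lemma hosvd_basis_unitarymx n k : hosvd_basis n k \is unitarymx.
Proof. by rewrite conjC_unitary sorted_spectral_unitarymx. Qed.

Lemma hatmx_hosvd_factor n k : hatmx (hosvd_factor n) k = (hosvd_basis n k)^t*.
Proof. by apply/matrixP => a b; rewrite mxE hat_unhat. Qed.

Lemma hatT_hosvd_core k :
  hatT hosvd_core k =1 cmodeprod (hosvd_basis^~ k) (hatT A k).
Proof. by move=> j; rewrite /hatT hat_unhat. Qed.

Lemma hosvd_factor_unitary n : tunitary L (hosvd_factor n).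
Proof.
have Q_unitary k := hosvd_basis_unitarymx n k.
split=> a b; apply: hat_inj => k; rewrite hat_tident /tmatmul hat_sum.
  have /matrixP/(_ a b) := trmxC_mul_unitary (Q_unitary k); rewrite !mxE => <-.
  apply: eq_bigr => l _.
  by rewrite hat_tmul /tmatH hat_tconj /hosvd_factor !hat_unhat !mxE !conjCK.
have /unitarymxP/matrixP/(_ a b) := Q_unitary k; rewrite !mxE => <-.
apply: eq_bigr => l _.
by rewrite hat_tmul /tmatH hat_tconj /hosvd_factor !hat_unhat !mxE !conjCK.
Qed.

Lemma hosvd_reconstruct i : A i = modeprod_all L hosvd_core hosvd_factor i.
Proof.
apply: hat_inj => k; have := hat_modeprod_all hosvd_core hosvd_factor k i.
rewrite /hatT => ->; rewrite (eq_cmodeprodr _ (hatT_hosvd_core k)) cmodeprodM.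
rewrite (@eq_cmodeprodl _ _ _ _ (fun m => 1%:M)) ?cmodeprod1 // => m.
by rewrite hatmx_hosvd_factor trmxC_mul_unitary ?hosvd_basis_unitarymx.
Qed.

Lemma mode_gram_hosvd_core k n :
  mode_gram (hatT hosvd_core k) n =
  diag_mx (sorted_spectral_diag (mode_gram (hatT A k) n)).
Proof.
rewrite (eq_mode_gram _ (hatT_hosvd_core k)) mode_gram_cmodeprod; last first.
  by move=> m _; rewrite trmxC_mul_unitary ?hosvd_basis_unitarymx.
rewrite /hosvd_basis -map_mx_comp (map_mx_id (@conjCK _)) map_trmx.
by rewrite sorted_spectralP ?mode_gram_herm.
Qed.

Lemma hosvd_core_orthogonal : all_orthogonal L hosvd_core.
Proof.
apply: all_orthogonal_hat => k n a b /negbTE neq_ab.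
by rewrite mode_gram_hosvd_core mxE neq_ab mulr0n.
Qed.

Lemma hosvd_core_ordered (c : C) (W : 'M[C]_p) :
  c != 0 -> cunitary W -> L = c *: W -> ordered_slices hosvd_core.
Proof.
move=> c_neq0 W_unitary L_eq; apply: (ordered_slices_hat c_neq0 W_unitary L_eq).
move=> k n a b le_ab.
have := sorted_spectral_diag_le (mode_gram_herm (hatT A k) n) le_ab.
by rewrite mode_gram_hosvd_core !mxE !eqxx !mulr1n.
Qed.

End TubalTransform.

Theorem theorem4p2 (R : rcfType) (p : nat) (L : 'M[R[i]]_p)
    (N : nat) (I : 'I_N -> nat) (A : @ttensor R p N I) :
  (0 < p)%N -> L \in unitmx ->
  (exists (S : @ttensor R p N I) (U : forall n : 'I_N, tmat R p (I n) (I n)),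
      (forall n, tunitary L (U n)) /\ all_orthogonal L S /\
      (forall i, A i = modeprod_all L S U i)) /\
  ((exists (c : R[i]) (W : 'M[R[i]]_p), c != 0 /\ cunitary W /\ L = c *: W) ->
    exists (S : @ttensor R p N I) (U : forall n : 'I_N, tmat R p (I n) (I n)),
      (forall n, tunitary L (U n)) /\ all_orthogonal L S /\
      ordered_slices S /\
      (forall i, A i = modeprod_all L S U i)).
Proof.
move=> _ L_unit.
have U_unitary := hosvd_factor_unitary L_unit A.
have S_orthogonal := hosvd_core_orthogonal L_unit A.
have A_eq := hosvd_reconstruct L_unit A.
split; first by exists (hosvd_core L A), (hosvd_factor L A).
move=> [c [W [c_neq0 [W_unitary L_eq]]]].
have S_ordered := hosvd_core_ordered L_unit A c_neq0 W_unitary L_eq.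
by exists (hosvd_core L A), (hosvd_factor L A).
Qed.
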